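(* Let $F=F_2$ be the free group on $x,y$, $F^{(1)}=[F,F]$, $F^{(2)}=[F^{(1)},F^{(1)}]$, let $w\in F^{(1)}\setminus F^{(2)}$, and suppose $\Phi_w(1,i)\neq 0$, where $i^2=-1$. Then $-\mathrm{id}$ lies in the image of the word map $w:\mathrm{SL}(2,\mathbb{C})^2\to\mathrm{SL}(2,\mathbb{C})$.
   Context: Write $[a,b]=aba^{-1}b^{-1}$ and $w_{n,m}=[x^n,y^m]$ for nonzero integers $n,m$. Every $w\in F^{(1)}$ has a unique shortest expression $w=\prod_{j=1}^r w_{n_j,m_j}^{s_j}$ with $s_j\ne0$ (the $w_{n,m}$ freely generate $F^{(1)}$). $\mathrm{Supp}(w)$ is the set of pairs $(n,m)$ with $w_{n,m}$ occurring, and $R_w(n,m)$ is the sum of the exponents of all occurrences of $w_{n,m}$. Define $$\Phi_w(\lambda,\mu)=\sum_{(\alpha,\beta)\in \mathrm{Supp}(w)} R_w(\alpha,\beta)\,\mathrm{sgn}(\alpha)\,(1-\mu^{2\beta})\,\lambda^{\alpha-|\alpha|+1}\,\frac{\lambda^{2|\alpha|}-1}{\lambda^2-1},$$ where $\frac{\lambda^{2|\alpha|}-1}{\lambda^2-1}=1+\lambda^2+\dots+\lambda^{2(|\alpha|-1)}$ is a polynomial, so that $\Phi_w(1,i)$ is defined. *)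

From HB Require Import structures.
From mathcomp Require Import all_boot all_order all_algebra.
From mathcomp Require Import reals complex.
Set Implicit Arguments. Unset Strict Implicit. Unset Printing Implicit Defensive.
Import Order.TTheory GRing.Theory Num.Theory.
Local Open Scope ring_scope.

(* A letter is (g, e): g = false is x, g = true is y; e = false is the
   generator itself, e = true its inverse. *)
Definition letter := (bool * bool)%type.
Definition linv (a : letter) : letter := (a.1, ~~ a.2).

Definition reduce (s : seq letter) : seq letter :=
  foldr (fun a acc => match acc with
                      | b :: t => if b == linv a then t else a :: acc
                      | [::] => [:: a] end) [::] s.

Definition fmul (u v : seq letter) : seq letter := reduce (u ++ v).
Definition finv (u : seq letter) : seq letter := reduce (rev (map linv u)).
Definition fcomm (u v : seq letter) : seq letter :=
  fmul u (fmul v (fmul (finv u) (finv v))).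

Definition fpow (u : seq letter) (k : int) : seq letter :=
  match k with
  | Posz n => iter n (fmul u) [::]
  | Negz n => iter n.+1 (fmul (finv u)) [::]
  end.

Definition fx : seq letter := [:: (false, false)].
Definition fy : seq letter := [:: (true, false)].

Inductive derived (S : seq letter -> Prop) : seq letter -> Prop :=
  | derived_one : derived S [::]
  | derived_comm a b : S a -> S b -> derived S (fcomm a b)
  | derived_mul u v : derived S u -> derived S v -> derived S (fmul u v)
  | derived_inv u : derived S u -> derived S (finv u).

Definition F1 : seq letter -> Prop := derived (fun _ => True).
Definition F2 : seq letter -> Prop := derived F1.

Definition wnm (n m : int) : seq letter := fcomm (fpow fx n) (fpow fy m).

(* an expression is a list of triples ((n_j, m_j), s_j) *)
Definition expr := seq ((int * int) * int).

Definition expr_word (l : expr) : seq letter :=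
  foldr (fun t acc => fmul (fpow (wnm t.1.1 t.1.2) t.2) acc) [::] l.

Definition reduced_expr (l : expr) : Prop :=
  (forall t, t \in l -> [/\ t.1.1 != 0, t.1.2 != 0 & t.2 != 0]) /\
  (forall j, (j.+1 < size l)%N ->
     (nth ((0,0),0) l j).1 != (nth ((0,0),0) l j.+1).1).

Definition Supp (l : expr) : seq (int * int) := undup (map fst l).
Definition Rw (l : expr) (p : int * int) : int :=
  \sum_(t <- l | t.1 == p) t.2.

Definition Phi {C : unitRingType} (l : expr) (lam mu : C) : C :=
  \sum_(p <- Supp l)
     (Rw l p)%:~R * (sgz p.1)%:~R * (1 - mu ^ (2 * p.2))
       * lam ^ (p.1 - `|p.1| + 1)
       * \sum_(k < `|p.1|%N) lam ^+ (2 * k).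

Definition eval_letter {C : comUnitRingType} (A B : 'M[C]_2) (a : letter)
  : 'M[C]_2 :=
  let g := if a.1 then B else A in if a.2 then g^-1 else g.

Definition word_map {C : comUnitRingType} (w : seq letter) (A B : 'M[C]_2)
  : 'M[C]_2 := \prod_(a <- w) eval_letter A B a.

(* Take A = diag(lam, lam^-1) and B = [[0,-1],[1,0]].  Conjugation by B inverts
   diagonal matrices, so [A^n, B^m] = diag(lam^(2n), lam^(-2n)) when m is odd
   and 1 when m is even.  Hence w(A, B) = diag(lam^(2E), lam^(-2E)) with
   E = sum of n_j s_j over the factors of w with m_j odd.  Since
   1 - i^(2m) is 2 or 0 according to the parity of m, Phi_w(1, i) = 2E, so
   E <> 0 and lam can be chosen with lam^(2E) = -1. *)
From Pilot Require Import Defs.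
From HB Require Import structures.
From mathcomp Require Import all_boot all_order all_algebra.
From mathcomp Require Import reals complex ring.
Set Implicit Arguments. Unset Strict Implicit.
Import Order.TTheory GRing.Theory Num.Theory.
Local Open Scope ring_scope.

Section WordMapMorphism.
Variable R : comUnitRingType.
Variables A B : 'M[R]_2.
Hypotheses (uA : A \is a GRing.unit) (uB : B \is a GRing.unit).
Notation wm w := (word_map w A B).
Notation ev := (eval_letter A B).

Lemma eval_letter_unit a : ev a \is a GRing.unit.
Proof. by case: a => [[] []]; rewrite /eval_letter /= ?unitrV. Qed.

Lemma eval_letter_linv a : ev a * ev (linv a) = 1.
Proof. by case: a => [[] []]; rewrite /eval_letter /= ?mulVr ?mulrV. Qed.

Lemma word_map_nil : wm [::] = 1.
Proof. exact: big_nil. Qed.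

Lemma word_map_cons a s : wm (a :: s) = ev a * wm s.
Proof. exact: big_cons. Qed.

Lemma word_map_cat s t : wm (s ++ t) = wm s * wm t.
Proof. exact: big_cat. Qed.

Lemma word_map_unit s : wm s \is a GRing.unit.
Proof.
elim: s => [|a s IH]; first by rewrite word_map_nil unitr1.
by rewrite word_map_cons unitrMl // eval_letter_unit.
Qed.

Lemma word_map_reduce s : wm (reduce s) = wm s.
Proof.
elim: s => [//|a s IH]; rewrite word_map_cons -IH /=.
case: (reduce s) => [|b t]; first by rewrite word_map_cons.
case: ifP => [/eqP -> | _]; last by rewrite [LHS]word_map_cons.
by rewrite word_map_cons mulrA eval_letter_linv mul1r.
Qed.

Lemma word_map_fmul u v : wm (fmul u v) = wm u * wm v.
Proof. by rewrite /fmul word_map_reduce word_map_cat. Qed.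

Lemma word_map_finv u : wm (Defs.finv u) = (wm u)^-1.
Proof.
rewrite /Defs.finv word_map_reduce.
suff inv_r : wm u * wm (rev (map linv u)) = 1.
  by rewrite -[RHS]mulr1 -inv_r mulKr // word_map_unit.
elim: u => [|a u IH]; first by rewrite word_map_nil mulr1.
rewrite /= rev_cons -cats1 word_map_cat word_map_cons mulrA -(mulrA (ev a)) IH.
by rewrite mulr1 /word_map big_seq1 eval_letter_linv.
Qed.

Lemma word_map_fpow u k : wm (fpow u k) = (wm u) ^ k.
Proof.
case: k => n; rewrite /fpow; last (rewrite NegzE -exprz_inv; move: n.+1 => {}n);
  rewrite -exprnP; elim: n => [|n IH]; rewrite ?word_map_nil //=.
  by rewrite word_map_fmul IH exprS.
by rewrite word_map_fmul IH exprS word_map_finv.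
Qed.

Lemma word_map_fcomm u v :
  wm (fcomm u v) = wm u * (wm v * ((wm u)^-1 * (wm v)^-1)).
Proof. by rewrite /fcomm !word_map_fmul !word_map_finv. Qed.

Lemma word_map_fx : wm fx = A. Proof. exact: big_seq1. Qed.
Lemma word_map_fy : wm fy = B. Proof. exact: big_seq1. Qed.

End WordMapMorphism.

Lemma mulVr_conj (R : unitRingType) (X P Q : R) :
  X \is a GRing.unit -> X * P = Q * X -> X^-1 * Q = P * X^-1.
Proof. by move=> uX XPQ; rewrite -[Q](mulrK uX) -XPQ mulrA mulKr. Qed.

Section SL2Matrices.
Variable F : fieldType.

Lemma det_mx2 (M : 'M[F]_2) : \det M = M 0 0 * M 1 1 - M 0 1 * M 1 0.
Proof.
rewrite (expand_det_row _ 0) big_ord_recl big_ord1 /cofactor !det_mx11 !mxE /=.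
have -> : lift 0 (0 : 'I_1) = 1 :> 'I_2 by apply/val_inj.
have -> : lift 1 (0 : 'I_1) = 0 :> 'I_2 by apply/val_inj.
by rewrite expr0 expr1 mul1r mulN1r mulrN.
Qed.

Definition diagmx (mu : F) : 'M[F]_2 :=
  \matrix_(i, j) (if i == j then (if i == 0 then mu else mu^-1) else 0).

Definition rotmx : 'M[F]_2 :=
  \matrix_(i, j) (if i == j then 0 else (if i == 0 then -1 else 1)).

Ltac mx2_entrywise := apply/matrixP; do 2![case=> [[|[|//]] ?]];
  rewrite !mxE ?big_ord_recl ?big_ord0 ?mxE /=.

Lemma diagmxM mu nu :
  mu != 0 -> nu != 0 -> diagmx mu * diagmx nu = diagmx (mu * nu).
Proof. by move=> mu0 nu0; rewrite -mulmxE; mx2_entrywise; rewrite ?invfM; ring. Qed.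

Lemma diagmx1 : diagmx 1 = 1.
Proof. by mx2_entrywise; rewrite ?invr1. Qed.

Lemma diagmxN1 : diagmx (-1) = -1.
Proof. by mx2_entrywise; rewrite ?invrN ?invr1 ?oppr0. Qed.

Lemma det_diagmx mu : mu != 0 -> \det (diagmx mu) = 1.
Proof. by move=> mu0; rewrite det_mx2 !mxE /= mulr0 subr0 divff. Qed.

Lemma det_rotmx : \det rotmx = 1.
Proof. by rewrite det_mx2 !mxE /=; ring. Qed.

Lemma diagmx_unit mu : mu != 0 -> diagmx mu \is a GRing.unit.
Proof. by move=> mu0; rewrite unitmxE det_diagmx ?unitr1. Qed.

Lemma rotmx_unit : rotmx \is a GRing.unit.
Proof. by rewrite unitmxE det_rotmx unitr1. Qed.

Lemma diagmxV mu : mu != 0 -> (diagmx mu)^-1 = diagmx mu^-1.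
Proof.
move=> mu0; have inv_r : diagmx mu * diagmx mu^-1 = 1.
  by rewrite diagmxM ?invr_eq0 // divff // diagmx1.
by rewrite -[LHS]mulr1 -inv_r mulKr // diagmx_unit.
Qed.

Lemma diagmx_exp mu n : mu != 0 -> diagmx mu ^+ n = diagmx (mu ^+ n).
Proof.
move=> mu0; elim: n => [|n IH]; first by rewrite !expr0 diagmx1.
by rewrite !exprS IH diagmxM ?expf_neq0.
Qed.

Lemma diagmx_expz mu k : mu != 0 -> diagmx mu ^ k = diagmx (mu ^ k).
Proof.
move=> mu0; case: k => n; first by rewrite -!exprnP diagmx_exp.
by rewrite NegzE -!exprz_inv -!exprnP diagmxV // diagmx_exp ?invr_eq0.
Qed.

Lemma rotmx_diagmx mu : mu != 0 -> rotmx * diagmx mu = diagmx mu^-1 * rotmx.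
Proof. by move=> mu0; rewrite -!mulmxE; mx2_entrywise; rewrite ?invrK; ring. Qed.

Lemma rotmx_exp_diagmx n mu : mu != 0 ->
  rotmx ^+ n * diagmx mu = diagmx (if odd n then mu^-1 else mu) * rotmx ^+ n.
Proof.
elim: n mu => [|n IH] mu mu0; first by rewrite expr0 mul1r mulr1.
rewrite exprS -mulrA IH // mulrA rotmx_diagmx; last by case: ifP; rewrite ?invr_eq0.
by rewrite -mulrA /=; case: (odd n); rewrite ?invrK.
Qed.

Lemma rotmx_expz_diagmx m mu : mu != 0 ->
  rotmx ^ m * diagmx mu = diagmx (if odd `|m|%N then mu^-1 else mu) * rotmx ^ m.
Proof.
move=> mu0; case: m => n; first by rewrite -exprnP rotmx_exp_diagmx.
rewrite NegzE -invr_expz -exprnP /=; apply: mulVr_conj.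
  by rewrite unitrX // rotmx_unit.
rewrite rotmx_exp_diagmx /=; last by case: (odd n); rewrite ?invr_eq0.
by case: (odd n); rewrite ?invrK.
Qed.

End SL2Matrices.

Arguments rotmx {F}.

Definition odd_weight (l : expr) : int :=
  \sum_(t <- l | odd `|t.1.2|%N) t.1.1 * t.2.

Section WordMapDiagRot.
Variables (F : fieldType) (lam : F).
Hypothesis lam0 : lam != 0.
Notation wm w := (word_map w (diagmx lam) rotmx).

Lemma word_map_wnm n m :
  wm (wnm n m) = diagmx (if odd `|m|%N then (lam ^ n) ^+ 2 else 1).
Proof.
have uA := diagmx_unit lam0; have uB := rotmx_unit F.
have lamn0 : lam ^ n != 0 by rewrite expfz_neq0.
have uBm : rotmx ^ m \is a GRing.unit := unitrXz m uB.
rewrite /wnm word_map_fcomm ?word_map_unit // !word_map_fpow // word_map_fx //.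
rewrite word_map_fy diagmx_expz // diagmxV // [rotmx ^ m * _]mulrA.
rewrite rotmx_expz_diagmx ?invr_eq0 // mulrK // invrK.
by case: ifP => _; rewrite diagmxM ?invr_eq0 // divff.
Qed.

Lemma word_map_expr_word l :
  wm (expr_word l) = diagmx ((lam ^ odd_weight l) ^+ 2).
Proof.
have uA := diagmx_unit lam0; have uB := rotmx_unit F.
elim: l => [|t l IH].
  by rewrite /odd_weight big_nil expr0z expr1n diagmx1 word_map_nil.
have -> : expr_word (t :: l) = fmul (fpow (wnm t.1.1 t.1.2) t.2) (expr_word l)
  by [].
have lamE0 : lam ^ odd_weight l != 0 by rewrite expfz_neq0.
rewrite word_map_fmul // word_map_fpow // word_map_wnm IH /odd_weight big_cons.
rewrite -/(odd_weight l); case: ifP => _; last by rewrite diagmx1 exp1rz mul1r.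
rewrite diagmx_expz ?diagmxM ?(sqrf_eq0, mulf_neq0, expfz_neq0) //.
by rewrite expfzDr // -exprz_exp exprMn !exprnP [in LHS]exprzAC.
Qed.

End WordMapDiagRot.

Section PhiAtSqrtN1.
Variable R : comUnitRingType.

Lemma sgz_mul_abs (x : int) : (sgz x)%:~R * (`|x|%N)%:R = x%:~R :> R.
Proof.
case: x => [[|n]|n]; first by rewrite mul0r.
  by rewrite gtr0_sgz // mul1r.
by rewrite ltr0_sgz // NegzE mulN1r.
Qed.

Lemma subr_sqrtN1_exp2z (j : R) (m : int) : j ^+ 2 = -1 ->
  1 - j ^ (2 * m) = (if odd `|m|%N then 2 else 0).
Proof.
move=> jj; case: m => n; last rewrite NegzE mulrN -invr_expz;
  rewrite -PoszM -exprnP exprM jj -signr_odd /=;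
  case: (odd _); rewrite ?expr0 ?expr1 ?invr1 ?invrN1 ?subrr //; ring.
Qed.

Lemma sum_Supp_Rw (g : int * int -> R) l :
  \sum_(p <- Supp l) (Rw l p)%:~R * g p = \sum_(t <- l) t.2%:~R * g t.1.
Proof.
rewrite /Rw; under eq_bigr do rewrite rmorph_sum mulr_suml big_mkcond.
rewrite exchange_big /= [LHS]big_seq [RHS]big_seq; apply: eq_bigr => t tl.
rewrite -big_mkcond /= (eq_bigr (fun=> t.2%:~R * g t.1)) => [|p /eqP <- //].
rewrite big_const_seq (eq_count (a2 := pred1 t.1)) => [|p]; last exact: eq_sym.
by rewrite count_uniq_mem ?undup_uniq // mem_undup map_f //= addr0.
Qed.

Lemma Phi_1_sqrtN1 l (j : R) : j ^+ 2 = -1 -> Phi l 1 j = 2 * (odd_weight l)%:~R.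
Proof.
move=> jj; rewrite /Phi (eq_bigr (fun p => (Rw l p)%:~R *
  (p.1%:~R * (if odd `|p.2|%N then 2 else 0)))) => [|p _]; last first.
  rewrite exp1rz mulr1 (eq_bigr (fun=> 1)) => [|k _]; last by rewrite expr1n.
  rewrite sumr_const card_ord subr_sqrtN1_exp2z // -(sgz_mul_abs p.1).
  by case: (odd _); ring.
rewrite sum_Supp_Rw /odd_weight rmorph_sum mulr_sumr [RHS]big_mkcond.
by apply: eq_bigr => t _; case: ifP => _; rewrite ?mulr0 // rmorphM /=; ring.
Qed.

End PhiAtSqrtN1.

Lemma exists_expz_sqr_eqN1 (C : numClosedFieldType) (z : int) : z != 0 ->
  exists2 r : C, r != 0 & (r ^ z) ^+ 2 = -1.
Proof.
move=> z0; have k0 : (0 < 2 * `|z|)%N by rewrite muln_gt0 absz_gt0.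
have [r rk] : exists r : C, r ^+ (2 * `|z|) = -1.
  by exists ((2 * `|z|)%N.-root (-1)); rewrite rootCK.
exists r.
  by apply: contra_eq_neq rk => ->; rewrite expr0n gtn_eqF //= eq_sym oppr_eq0 oner_eq0.
case: z z0 {k0} rk => n _ /=; last rewrite NegzE -invr_expz exprVn;
  by rewrite -exprnP -exprM mulnC => ->; rewrite ?invrN1.
Qed.

Theorem proposition6p5 (R : realType) (l : expr) :
  reduced_expr l ->
  ~ F2 (expr_word l) ->
  Phi l (1 : R[i]) 'i != 0 ->
  exists A B : 'M[R[i]]_2,
    [/\ \det A = 1, \det B = 1 & word_map (expr_word l) A B = - 1].
Proof.
move=> _ _ Phi_neq0.
have weight0 : odd_weight l != 0.
  by apply: contra_neq Phi_neq0; rewrite Phi_1_sqrtN1 ?sqrCi // => ->; rewrite mulr0.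
have [lam lam0 lam_pow] := exists_expz_sqr_eqN1 (R[i]) weight0.
exists (diagmx lam), rotmx; split; rewrite ?det_diagmx ?det_rotmx //.
by rewrite word_map_expr_word // lam_pow diagmxN1.
Qed.
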